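(* Let $n\ge 2$, $A\in\mathbb{Z}^{d\times n}$, $\mathbf{b}\in\mathbb{Z}^d$, $\mathbf{c}\in\mathbb{Z}^n$, $\mathbf{u}\in\mathbb{Z}_{\ge0}^n$, and consider the ILP $\min\{\mathbf{c}^\top\mathbf{x} : A\mathbf{x}=\mathbf{b},\ \mathbf{0}\le\mathbf{x}\le\mathbf{u},\ \mathbf{x}\in\mathbb{Z}^n\}$. Let $\mathbf{x}_0$ be a feasible solution that is not optimal and let $\mathbf{x}_{\min}$ be an optimal solution. Then every sequence of discrete deepest-descent augmentations (with respect to the Graver basis $\mathcal{G}(A)$) starting at $\mathbf{x}_0$ reaches an optimal solution after at most $$\max\{1,\ (4n-4)\log_2\big(\mathbf{c}^\top(\mathbf{x}_0-\mathbf{x}_{\min})\big)\}$$ augmentations.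
   Context: Feasible solutions are the $\mathbf{x}\in\mathbb{Z}^n$ with $A\mathbf{x}=\mathbf{b}$, $\mathbf{0}\le\mathbf{x}\le\mathbf{u}$. For $\mathbf{v},\mathbf{w}\in\mathbb{R}^n$ write $\mathbf{v}\sqsubseteq\mathbf{w}$ if $v_iw_i\ge0$ and $|v_i|\le|w_i|$ for all $i$. The Graver basis $\mathcal{G}(A)$ is the (finite) set of $\sqsubseteq$-minimal elements of $(\ker(A)\cap\mathbb{Z}^n)\setminus\{\mathbf{0}\}$. Discrete deepest-descent augmentation: given a feasible $\mathbf{x}_k$, among all pairs $(\mathbf{z},\alpha)$ with $\mathbf{z}\in\mathcal{G}(A)$, $\alpha$ a positive integer and $\mathbf{x}_k+\alpha\mathbf{z}$ feasible, choose one maximizing $-\alpha\,\mathbf{c}^\top\mathbf{z}$; if this maximum is positive, set $\mathbf{x}_{k+1}:=\mathbf{x}_k+\alpha\mathbf{z}$, otherwise stop. *)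

From HB Require Import structures.
From mathcomp Require Import all_boot all_order all_algebra.
From Stdlib Require Reals.
Set Implicit Arguments. Unset Strict Implicit. Unset Printing Implicit Defensive.
Import Order.TTheory GRing.Theory Num.Theory.
Local Open Scope ring_scope.

Definition cost (n : nat) (c x : 'cV[int]_n) : int := \sum_(i < n) c i 0 * x i 0.

Definition feasible (d n : nat) (A : 'M[int]_(d, n)) (b : 'cV[int]_d)
  (u x : 'cV[int]_n) : Prop :=
  A *m x = b /\ (forall i, 0 <= x i 0 /\ x i 0 <= u i 0).

Definition optimal (d n : nat) (A : 'M[int]_(d, n)) (b : 'cV[int]_d)
  (c u x : 'cV[int]_n) : Prop :=
  feasible A b u x /\ (forall y, feasible A b u y -> cost c x <= cost c y).

Definition conformal (n : nat) (v w : 'cV[int]_n) : Prop :=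
  forall i, 0 <= v i 0 * w i 0 /\ `|v i 0| <= `|w i 0|.

Definition in_graver (d n : nat) (A : 'M[int]_(d, n)) (z : 'cV[int]_n) : Prop :=
  z <> 0 /\ A *m z = 0 /\
  (forall w : 'cV[int]_n, w <> 0 -> A *m w = 0 -> conformal w z -> w = z).

Definition dd_step (d n : nat) (A : 'M[int]_(d, n)) (b : 'cV[int]_d)
  (c u x y : 'cV[int]_n) : Prop :=
  exists (z : 'cV[int]_n) (alpha : nat),
    [/\ in_graver A z, (0 < alpha)%N, y = x + (alpha%:R : int) *: z
      & feasible A b u y] /\
        (forall (z' : 'cV[int]_n) (alpha' : nat), in_graver A z' -> (0 < alpha')%N ->
           feasible A b u (x + (alpha'%:R : int) *: z') ->
           - ((alpha'%:R : int) * cost c z') <= - ((alpha%:R : int) * cost c z)) /\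
    0 < - ((alpha%:R : int) * cost c z).

Definition dd_stops (d n : nat) (A : 'M[int]_(d, n)) (b : 'cV[int]_d)
  (c u x : 'cV[int]_n) : Prop :=
  forall (z : 'cV[int]_n) (alpha : nat), in_graver A z -> (0 < alpha)%N ->
    feasible A b u (x + (alpha%:R : int) *: z) ->
    - ((alpha%:R : int) * cost c z) <= 0.

Definition int_to_Z (z : int) : BinNums.Z :=
  match z with
  | Posz m => BinInt.Z.of_nat m
  | Negz m => BinInt.Z.opp (BinInt.Z.of_nat m.+1)
  end.

Definition within_bound (k n : nat) (D : int) : Prop :=
  Rdefinitions.Rle (Raxioms.INR k)
    (Rbasic_fun.Rmax (Raxioms.INR 1)
       (Rdefinitions.Rmult (Raxioms.INR (4 * n - 4))
          (Rdefinitions.Rdiv (Rpower.ln (Rdefinitions.IZR (int_to_Z D)))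
                             (Rpower.ln (Raxioms.INR 2))))).

From HB Require Import structures.
From mathcomp Require Import all_boot all_order all_algebra.
From mathcomp Require Import zify.
From Stdlib Require Import Classical.
From Stdlib Require Reals Lra.

(* For a feasible non-optimal x, the direction xmin - x lies in ker A and is
   a sum of Graver elements conformal to it.  By Caratheodory's theorem a
   nonnegative rational combination of at most n of them already represents
   it, so one term lam * g carries at least 1/n of the gap c(x - xmin);
   rounding lam to a positive integer al with lam <= 2 al keeps x + al g
   feasible (conformality) and gains at least 1/(2n) of the gap.  A deepest
   descent step gains at least as much, so the gap shrinks by the factor
   (2n-1)/(2n) at each step; being a positive integer while x is not optimal,
   the gap forces optimality once ((2n-1)/(2n))^k c(x0 - xmin) < 1, and the
   least such k is at most max{1, (4n-4) log2 c(x0 - xmin)}. *)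

Set Implicit Arguments. Unset Strict Implicit. Unset Printing Implicit Defensive.
Import Order.TTheory GRing.Theory Num.Theory.
Local Open Scope ring_scope.

Lemma expn_bernoulli a k : (0 < a)%N -> (a ^ k * (a + k) <= a.+1 ^ k * a)%N.
Proof.
move=> a_gt0; elim: k => [|k IH]; first by rewrite !expn0 !mul1n addn0.
by rewrite !expnS; move: IH; move: (a ^ k)%N (a.+1 ^ k)%N => P Q; nia.
Qed.

Lemma exists_contracting_power a D : (0 < a)%N -> exists k, (a ^ k * D < a.+1 ^ k)%N.
Proof.
move=> a_gt0; exists (a * D)%N; have := expn_bernoulli (a * D) a_gt0.
have : (0 < a ^ (a * D))%N by rewrite expn_gt0 a_gt0.
by move: (a ^ (a * D))%N (a.+1 ^ (a * D))%N => P Q; nia.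
Qed.

Module Log2Bound.
Import Reals Lra ssrnat.
Local Open Scope R_scope.

Lemma INR_expn (m k : nat) : INR (m ^ k)%N = INR m ^ k.
Proof. by elim: k => [|k IH] //=; rewrite expnS mulnE mult_INR IH. Qed.

Lemma ln_le_subr1 y : 0 < y -> ln y <= y - 1.
Proof. by move=> y_gt0; have := exp_ineq1_le (ln y); rewrite exp_ln //; lra. Qed.

Lemma ln_le x y : 0 < x -> x <= y -> ln x <= ln y.
Proof. by move=> x_gt0 [xy|<-]; [apply/Rlt_le/ln_increasing | lra]. Qed.

(* [exp (3/4) = exp (3/20) ^ 5 >= 1.15 ^ 5 > 2] *)
Lemma ln2_le : ln 2 <= 3 / 4.
Proof.
have e_ge : 1.15 <= exp (3 / 20) by have := exp_ineq1_le (3 / 20); lra.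
have two_le : 2 <= exp (3 / 20) ^ 5.
  by apply: (Rle_trans _ (1.15 ^ 5)); [simpl; lra | apply: pow_incr; lra].
have := ln_le Rlt_0_2 two_le.
by rewrite ln_pow ?ln_exp /=; [lra | apply: exp_pos].
Qed.

Lemma ln_pred_le N : 1 < N -> ln (N - 1) <= ln N - / N.
Proof.
move=> N_gt1; have -> : N - 1 = N * ((N - 1) / N) by field; lra.
rewrite ln_mult; try lra; last by apply: Rdiv_lt_0_compat; lra.
have := @ln_le_subr1 ((N - 1) / N) ltac:(apply: Rdiv_lt_0_compat; lra).
have -> : (N - 1) / N - 1 = - / N by field; lra.
lra.
Qed.

(* If [k] contractions by [(2n-1)/(2n)] do not yet beat [D], then
   [k <= 2n ln D]; with [ln 2 <= 3/4] this leaves room for one more step. *)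
Lemma iterations_log2_bound (n k D : nat) : (2 <= n)%N -> (2 <= D)%N ->
  ((2 * n) ^ k <= (2 * n - 1) ^ k * D)%N ->
  INR k.+1 <= INR (4 * n - 4) * (ln (INR D) / ln (INR 2)).
Proof.
move=> n_ge2 D_ge2 not_contracted.
have N_ge2 : 2 <= INR n by apply: (le_INR 2); apply/leP.
have D_ge : 2 <= INR D by apply: (le_INR 2); apply/leP.
have -> : INR (4 * n - 4) = 4 * INR n - 4.
  by rewrite minus_INR ?mulnE ?mult_INR /=; [lra | apply/leP; lia].
have H : (2 * INR n) ^ k <= (2 * INR n - 1) ^ k * INR D.
  have := le_INR _ _ (elimT leP not_contracted).
  rewrite mulnE mult_INR !INR_expn minus_INR ?mulnE ?mult_INR //.
  by apply/leP; lia.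
set N := INR n in N_ge2 H *.
have lnD_ge : ln 2 <= ln (INR D) by apply: ln_le; lra.
have k_le : INR k <= 2 * N * ln (INR D).
  have := ln_le (pow_lt (2 * N) k ltac:(lra)) H.
  rewrite ln_mult ?ln_pow; try lra; last by apply: pow_lt; lra.
  have := @ln_pred_le (2 * N) ltac:(lra).
  have k_ge0 := pos_INR k; move=> pred_le ln_ineq.
  have k_div : INR k * / (2 * N) <= ln (INR D).
    move: (/ (2 * N)) (ln (2 * N)) (ln (2 * N - 1)) => t a b in pred_le ln_ineq *; nra.
  have -> : INR k = INR k * / (2 * N) * (2 * N) by field; lra.
  by rewrite [2 * N * _]Rmult_comm; apply: Rmult_le_compat_r; lra.
have [ln2_gt ln2_le34] := (ln_lt_2, ln2_le).
rewrite S_INR (_ : INR 2 = 2) //.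
apply: (Rmult_le_reg_r (ln 2)); first lra.
have -> : (4 * N - 4) * (ln (INR D) / ln 2) * ln 2 = (4 * N - 4) * ln (INR D).
  by field; lra.
have k_ge0 := pos_INR k.
nra.
Qed.

Lemma within_bound_le j k n D : (j <= k)%N -> within_bound k n D -> within_bound j n D.
Proof. by move=> /leP jk; apply: Rle_trans (le_INR _ _ jk). Qed.

Lemma steps_within_bound (n D : nat) : (2 <= n)%N -> (0 < D)%N ->
  exists k, ((2 * n - 1) ^ k * D < (2 * n) ^ k)%N /\ within_bound k n (Posz D).
Proof.
move=> n_ge2 D_gt0; have a_gt0 : (0 < 2 * n - 1)%N by lia.
have a_succ : (2 * n - 1).+1 = (2 * n)%N by lia.
have ex_k := exists_contracting_power D a_gt0; rewrite a_succ in ex_k.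
have [k contracted k_min] := ex_minnP ex_k; exists k; split=> //.
rewrite /within_bound [int_to_Z _]/= -INR_IZR_INZ.
case: k contracted k_min => [|[|k]] contracted k_min.
- by move: contracted; rewrite !expn0; lia.
- exact: Rmax_l.
apply: Rle_trans (Rmax_r _ _).
have not_contracted : ((2 * n) ^ k.+1 <= (2 * n - 1) ^ k.+1 * D)%N.
  by rewrite leqNgt; apply/negP => /k_min; lia.
apply: iterations_log2_bound => //.
have : ((2 * n - 1) ^ k.+1 < (2 * n) ^ k.+1)%N by rewrite ltn_exp2r //; lia.
by case: D {D_gt0 ex_k k_min contracted} not_contracted => [|[|D]] //; lia.
Qed.

End Log2Bound.

From mathcomp Require Import ring lra.

Definition conf_le {R : numDomainType} (a b : R) : bool :=
  (0 <= a <= b) || (b <= a <= 0).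

Section ConfLe.
Variable R : realDomainType.

Lemma conf_le_intr (a b : int) : conf_le (a%:~R : R) b%:~R = conf_le a b.
Proof. by rewrite /conf_le ler0z lerz0 !ler_int. Qed.

Lemma conf_le_scale (lam mu a b : R) :
  0 <= mu <= lam -> conf_le (lam * a) b -> conf_le (mu * a) b.
Proof.
rewrite /conf_le => /andP[mu0 mu_lam] h; apply/orP.
have [a0|a0] := lerP 0 a.
  have h1 : 0 <= mu * a by nra.
  have h2 : mu * a <= lam * a by nra.
  by case/orP: h => /andP[] *; [left|right]; apply/andP; split; lra.
have h1 : mu * a <= 0 by nra.
have h2 : lam * a <= mu * a by nra.
by case/orP: h => /andP[] *; [left|right]; apply/andP; split; lra.
Qed.

(* All terms of a nonnegative combination of elements conformal to [b] have
   the sign of [b], so none of them can exceed the sum. *)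
Lemma conf_le_conic_term (I : finType) (l h : I -> R) (b : R) :
  (forall k, 0 <= l k) -> (forall k, conf_le (h k) b) ->
  \sum_k l k * h k = b -> forall i, conf_le (l i * h i) b.
Proof.
move=> l0 hb <- i; rewrite /conf_le (bigD1 i) //=.
have [b0|b0] := lerP 0 b.
- have ge0 k : 0 <= l k * h k.
    by apply: mulr_ge0 => //; case/orP: (hb k) => /andP[]; lra.
  by rewrite ge0 lerDl sumr_ge0.
- have le0 k : l k * h k <= 0.
    by apply: mulr_ge0_le0 => //; case/orP: (hb k) => /andP[]; lra.
  by rewrite le0 gerDl sumr_le0 // orbT.
Qed.

End ConfLe.

Lemma exists_large_term (R : realDomainType) (I : finType) (S : {set I}) (F : I -> R) :
  (forall i, i \notin S -> F i = 0) -> 0 < \sum_i F i ->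
  exists i, 0 < F i /\ \sum_i F i <= #|S|%:R * F i.
Proof.
move=> F0 sum_gt0.
have sumS : \sum_i F i = \sum_(i in S) F i.
  by rewrite (bigID (mem S)) /= [X in _ + X]big1 ?addr0 // => i /F0.
have [i0 i0S] : exists i0, i0 \in S.
  apply: NNPP => noS; move: sum_gt0; rewrite sumS big1 ?ltxx // => i iS.
  by case: noS; exists i.
have [i1 i1S i1max] := arg_maxP F i0S.
have le_max : \sum_i F i <= #|S|%:R * F i1.
  by rewrite sumS mulr_natl -sumr_const; apply: ler_sum.
exists i1; split=> //; rewrite ltNge; apply/negP => Fi1_le0.
by have := le_trans le_max (mulr_ge0_le0 (ler0n _ _) Fi1_le0); rewrite leNgt sum_gt0.
Qed.

Lemma conf_le_int (a b : int) : (0 <= a * b /\ `|a| <= `|b|) <-> conf_le a b.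
Proof. by rewrite /conf_le; split=> [[]|]; nia. Qed.

Lemma conformalE n (v w : 'cV[int]_n) :
  conformal v w <-> forall i, conf_le (v i 0) (w i 0).
Proof. by split=> h i; apply/conf_le_int; apply: h. Qed.

Section Conformal.
Variable n : nat.
Implicit Types v w g : 'cV[int]_n.

Lemma conformal_refl v : conformal v v.
Proof. by apply/conformalE => i; rewrite /conf_le; lia. Qed.

Lemma conformal_trans v w g : conformal v w -> conformal w g -> conformal v g.
Proof.
move=> /conformalE vw /conformalE wg; apply/conformalE => i.
by move: (vw i) (wg i); rewrite /conf_le; lia.
Qed.

Lemma conformal_subr g v : conformal g v -> conformal (v - g) v.
Proof.
move=> /conformalE gv; apply/conformalE => i.
by move: (gv i); rewrite /conf_le !mxE; move: (v i 0) (g i 0); lia.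
Qed.

Definition norm1 v : nat := (\sum_i `|v i 0%R|)%N.

Lemma norm1_eq0 v : norm1 v = 0%N -> v = 0.
Proof.
move=> /eqP; rewrite /norm1 sum_nat_eq0 => /forallP v0.
by apply/matrixP => i j; rewrite (ord1 j) mxE; move: (v0 i); lia.
Qed.

Lemma conformal_norm1_lt w v : conformal w v -> w <> v -> (norm1 w < norm1 v)%N.
Proof.
move=> /conformalE wv wNv.
have [i lt_i] : exists i, (`|w i 0%R| < `|v i 0%R|)%N.
  apply: NNPP => eq_abs; apply: wNv; apply/matrixP => p q; rewrite (ord1 q).
  have : ~ (`|w p 0%R| < `|v p 0%R|)%N by move=> lt_p; apply: eq_abs; exists p.
  by move: (wv p); rewrite /conf_le; lia.
rewrite /norm1 (bigD1 i) //= [X in (_ < X)%N](bigD1 i) //= -addSn leq_add //.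
by apply: leq_sum => j _; move: (wv j); rewrite /conf_le; lia.
Qed.

Lemma conformal_norm1B g v : conformal g v -> norm1 (v - g) = (norm1 v - norm1 g)%N.
Proof.
move=> /conformalE gv.
suff -> : norm1 v = (norm1 (v - g) + norm1 g)%N by rewrite addnK.
rewrite /norm1 -big_split /=; apply: eq_bigr => i _.
by move: (gv i); rewrite /conf_le !mxE; move: (v i 0) (g i 0); lia.
Qed.

End Conformal.

Section GraverDecomposition.
Variables (d n : nat) (A : 'M[int]_(d, n)).

Lemma exists_graver_conformal w v : w <> 0 -> A *m w = 0 -> conformal w v ->
  exists2 g, in_graver A g & conformal g v.
Proof.
move: {2}(norm1 w) (leqnn (norm1 w)) => k.
elim: k w => [|k IH] w w_le w0 Aw wv; first by case: w0; apply: norm1_eq0; lia.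
have [wG|wNG] := classic (in_graver A w); first by exists w.
have [w' [w'0 Aw' w'w w'Nw]] :
    exists w', [/\ w' <> 0, A *m w' = 0, conformal w' w & w' <> w].
  apply: NNPP => no_w'; apply: wNG; do 2!split=> //.
  by move=> w' *; apply: NNPP => w'Nw; apply: no_w'; exists w'.
apply: (IH w') => //; last exact: conformal_trans w'w wv.
by have := conformal_norm1_lt w'w w'Nw; lia.
Qed.

Lemma graver_decomposition v : A *m v = 0 ->
  exists s : seq 'cV[int]_n,
    (forall g, g \in s -> in_graver A g /\ conformal g v) /\ v = \sum_(g <- s) g.
Proof.
move: {2}(norm1 v) (leqnn (norm1 v)) => k.
elim: k v => [|k IH] v v_le Av.
  by exists [::]; rewrite big_nil; split=> //; apply: norm1_eq0; lia.
have [->|v0] := eqVneq v 0; first by exists [::]; rewrite big_nil.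
have [g gG gv] := exists_graver_conformal (elimN eqP v0) Av (conformal_refl v).
have g0 : (0 < norm1 g)%N.
  by rewrite lt0n; apply/eqP => /norm1_eq0; case: gG.
have Avg : A *m (v - g) = 0 by rewrite mulmxBr Av gG.2.1 subr0.
have [|s [sG vgE]] := IH (v - g) _ Avg.
  by rewrite conformal_norm1B //; have := conformal_norm1_lt gv; lia.
exists (g :: s); rewrite big_cons; split=> [h|]; last by rewrite -vgE addrC subrK.
rewrite inE => /orP[/eqP -> //|hs]; have [hG hvg] := sG h hs.
by split=> //; apply: conformal_trans hvg (conformal_subr gv).
Qed.

End GraverDecomposition.

Section Caratheodory.
Variables (R : realFieldType) (n m : nat) (H : 'I_m -> 'cV[R]_n).

Lemma dependent_large_support (S : {set 'I_m}) : (n < #|S|)%N ->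
  exists w : 'I_m -> R, [/\ forall i, i \notin S -> w i = 0,
    exists i, w i != 0 & \sum_i w i *: H i = 0].
Proof.
move=> n_lt_S; have /card_gt0P [i0 i0S] : (0 < #|S|)%N by lia.
pose M : 'M[R]_(#|S|, n) := \matrix_(k, j) H (enum_val k) j 0.
have : kermx M != 0.
  by rewrite kermx_eq0 -row_leq_rank -ltnNge (leq_ltn_trans (rank_leq_col M)).
case/rowV0Pn => r /sub_kermxP rM r0.
have [j rj0] : exists j, r 0 j != 0.
  apply: NNPP => r_eq0; case/eqP: r0; apply/rowP => j; rewrite mxE.
  by apply: NNPP => rj; apply: r_eq0; exists j; apply/eqP.
exists (fun i => if i \in S then r 0 (enum_rank_in i0S i) else 0); split.
- by move=> i /negbTE ->.
- by exists (enum_val j); rewrite enum_valP enum_valK_in.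
rewrite (bigID (mem S)) /= [X in _ + X]big1 ?addr0 => [|i /negbTE ->]; last first.
  by rewrite scale0r.
rewrite (eq_bigr (fun i => r 0 (enum_rank_in i0S i) *: H i)) => [|i ->] //.
rewrite big_enum_val /=; apply/matrixP => p q; rewrite (ord1 q) summxE mxE.
have := congr1 (fun X : 'rV[R]_n => X 0 p) rM; rewrite !mxE => rMp.
apply: etrans rMp; apply: eq_bigr => k _; rewrite !mxE enum_valK_in //.
Qed.

(* Eliminate one generator at a time along a linear dependence. *)
Lemma conic_caratheodory (l : 'I_m -> R) : (forall i, 0 <= l i) ->
  exists l' : 'I_m -> R, [/\ forall i, 0 <= l' i,
    (#|[set i | l' i != 0%R]| <= n)%N & \sum_i l' i *: H i = \sum_i l i *: H i].
Proof.
move: {2}#|_| (leqnn #|[set i | l i != 0%R]|) => k.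
elim: k l => [|k IH] l supp_le l0; first by exists l; split=> //; lia.
have [|S_gt] := leqP #|[set i | l i != 0%R]| n; first by exists l.
set S := [set i | l i != 0] in supp_le S_gt.
have [w [wS [i0 wi0] w_dep]] : exists w : 'I_m -> R,
    [/\ forall i, i \notin S -> w i = 0, exists i, 0 < w i & \sum_i w i *: H i = 0].
  have [w [wS [i0 wi0] w_dep]] := dependent_large_support S_gt.
  have [wi0_gt|wi0_lt] := ltP 0 (w i0); first by exists w; split=> //; exists i0.
  exists (fun i => - w i); split=> [i /wS ->| |]; first by rewrite oppr0.
    by exists i0; rewrite oppr_gt0 lt_neqAle wi0 wi0_lt.
  by rewrite (eq_bigr (fun i => - (w i *: H i))) ?sumrN ?w_dep ?oppr0 // => i _; rewrite scaleNr.
have [i1 wi1 i1min] := @arg_minP _ _ _ i0 (fun i => 0 < w i) (fun i => l i / w i) wi0.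
set t := l i1 / w i1 in i1min.
pose l' i := l i - t * w i.
have l'0 i : 0 <= l' i.
  rewrite /l' subr_ge0; have [wi_gt|wi_le] := ltP 0 (w i).
    by rewrite -(divfK (lt0r_neq0 wi_gt) (l i)) ler_wpM2r ?i1min // ltW.
  by apply: le_trans (l0 i); rewrite mulr_ge0_le0 // divr_ge0 // ltW.
have supp_lt : [set i | l' i != 0] \proper S.
  apply/properP; split.
    apply/subsetP => i; rewrite !inE; apply: contraNneq => li0.
    by rewrite /l' li0 wS ?inE ?li0 ?eqxx // mulr0 subr0.
  exists i1; last by rewrite inE /l' /t divfK ?subrr ?eqxx // lt0r_neq0.
  rewrite inE; apply/negP => /eqP li1.
  by move: wi1; rewrite wS ?ltxx // inE li1 eqxx.
have [|l'' [l''0 l''_supp l''E]] := IH l' _ l'0.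
  exact: leq_trans (proper_card supp_lt) supp_le.
exists l''; split=> //; rewrite l''E /l'.
rewrite (eq_bigr (fun i => l i *: H i - t *: (w i *: H i))) => [|i _]; last first.
  by rewrite scalerBl scalerA.
by rewrite sumrB -scaler_sumr w_dep scaler0 subr0.
Qed.

End Caratheodory.

Section Cost.
Variables (n : nat) (c : 'cV[int]_n).
Implicit Types x y v : 'cV[int]_n.

Lemma costB x y : cost c (x - y) = cost c x - cost c y.
Proof. by rewrite /cost -sumrB; apply: eq_bigr => i _; rewrite !mxE mulrBr. Qed.

Lemma costDZ x a y : cost c (x + a *: y) = cost c x + a * cost c y.
Proof.
rewrite /cost mulr_sumr -big_split; apply: eq_bigr => i _ /=.
by rewrite !mxE mulrDr mulrCA.
Qed.

Lemma cost_conic m (h : 'I_m -> 'cV[int]_n) (l : 'I_m -> rat) v :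
  (forall p, \sum_i l i * (h i p 0)%:~R = (v p 0)%:~R) ->
  \sum_i l i * (cost c (h i))%:~R = (cost c v)%:~R.
Proof.
move=> hv; rewrite /cost rmorph_sum /=.
under eq_bigr do rewrite rmorph_sum mulr_sumr.
rewrite exchange_big /=; apply: eq_bigr => p _.
rewrite intrM -hv mulr_sumr; apply: eq_bigr => i _ /=.
by rewrite intrM mulrCA.
Qed.

End Cost.

Section Gain.
Variables (d n : nat) (A : 'M[int]_(d, n)) (b : 'cV[int]_d) (c u : 'cV[int]_n).
Implicit Types x y v w g : 'cV[int]_n.

Lemma feasible_add_conformal x y w : feasible A b u x -> feasible A b u y ->
  conformal w (y - x) -> A *m w = 0 -> feasible A b u (x + w).
Proof.
move=> [Ax x_bd] [Ay y_bd] /conformalE wyx Aw.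
split=> [|i]; first by rewrite mulmxDr Ax Aw addr0.
move: (x_bd i) (y_bd i) (wyx i); rewrite /conf_le !mxE.
by move: (x i 0) (y i 0) (w i 0) (u i 0); lia.
Qed.

Lemma graver_conic_decomposition v : A *m v = 0 ->
  exists m (h : 'I_m -> 'cV[int]_n) (l : 'I_m -> rat),
  [/\ forall i, in_graver A (h i) /\ conformal (h i) v, forall i, 0 <= l i,
      (#|[set i | l i != 0%R]| <= n)%N &
      forall p, \sum_i l i * (h i p 0)%:~R = (v p 0)%:~R].
Proof.
move=> /graver_decomposition[s [sG vE]].
pose H i : 'cV[rat]_n := map_mx intr (nth 0 s i).
have [l [l0 l_supp lE]] := conic_caratheodory H (fun _ : 'I_(size s) => ler01).
exists (size s), (fun i => nth 0 s i), l; split=> // [i|p].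
  by apply: sG; apply: mem_nth.
transitivity ((\sum_i l i *: H i) p 0).
  by rewrite summxE; apply: eq_bigr => i _; rewrite !mxE.
rewrite lE vE (big_nth 0) big_mkord !summxE rmorph_sum; apply: eq_bigr => i _.
by rewrite !mxE mul1r.
Qed.

Lemma conformal_round g v (lam : rat) : 0 <= lam -> conformal g v ->
  (forall p, conf_le (lam * (g p 0)%:~R) (v p 0)%:~R) ->
  exists al : nat, [/\ (0 < al)%N, conformal (al%:R *: g) v & lam <= 2 * al%:R].
Proof.
move=> lam0 gv lam_gv; have [lam1|lam1] := lerP 1 lam; last first.
  by exists 1%N; rewrite scale1r; split=> //; lra.
exists (Num.truncn lam); split; first by rewrite truncn_gt0.
  apply/conformalE => p; rewrite mxE -(conf_le_intr rat) intrM mulrz_nat.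
  by apply: conf_le_scale (lam_gv p); rewrite ler0n truncn_le.
have := truncnS_gt lam; have : 1 <= (Num.truncn lam)%:R :> rat.
  by rewrite ler1n truncn_gt0.
by rewrite -natr1; lra.
Qed.

Lemma graver_step_gain x y : feasible A b u x -> feasible A b u y ->
  cost c y < cost c x ->
  exists (g : 'cV[int]_n) (al : nat), [/\ in_graver A g, (0 < al)%N,
    feasible A b u (x + (al%:R : int) *: g) &
    cost c x - cost c y <= (2 * n)%:R * ((al%:R : int) * - cost c g)].
Proof.
move=> x_feas y_feas cyx; set v := y - x.
have Av : A *m v = 0 by rewrite mulmxBr (proj1 x_feas) (proj1 y_feas) subrr.
have [m [h [l [hG l0 l_supp hv]]]] := graver_conic_decomposition Av.
pose F i : rat := l i * (- cost c (h i))%:~R.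
have sumF : \sum_i F i = (cost c x - cost c y)%:~R.
  rewrite /F; under eq_bigr do rewrite intrN mulrN.
  by rewrite sumrN (cost_conic c hv) /v costB -intrN opprB.
have F0 i : i \notin [set i | l i != 0%R] -> F i = 0.
  by rewrite inE negbK /F => /eqP ->; rewrite mul0r.
have sumF_gt0 : 0 < \sum_i F i by rewrite sumF ltr0z subr_gt0.
have [i [Fi_gt0 Fi_max]] := exists_large_term F0 sumF_gt0.
have hv_i p : conf_le (l i * (h i p 0)%:~R) (v p 0)%:~R.
  apply: (conf_le_conic_term (h := fun k => (h k p 0)%:~R) l0 _ (hv p)) => k.
  by rewrite conf_le_intr; move/conformalE: (hG k).2.
have [al [al_gt0 al_conf l_le]] := conformal_round (l0 i) (hG i).2 hv_i.
exists (h i), al; split=> //; first exact: (hG i).1.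
  apply: feasible_add_conformal x_feas y_feas al_conf _.
  by rewrite -scalemxAr (proj1 (proj2 (hG i).1)) scaler0.
rewrite -(ler_int rat) !rmorphM /= !rmorph_nat natrM -sumF.
have n_ge : #|[set i | l i != 0%R]|%:R <= n%:R :> rat by rewrite ler_nat.
move: Fi_gt0 Fi_max n_ge l_le (l0 i); rewrite /F.
move: (\sum_i _) (#|_|%:R : rat) (l i) ((- cost c (h i))%:~R : rat) => G s li gi.
move=> ligi_gt0 G_le s_le li_le li_ge0.
have gi_gt0 : 0 < gi by nra.
have := ler_wpM2r (ltW ligi_gt0) s_le.
have := ler_wpM2l (ler0n _ n) (ler_wpM2r (ltW gi_gt0) li_le).
lra.
Qed.

End Gain.

Section DeepestDescent.
Variables (d n : nat) (A : 'M[int]_(d, n)) (b : 'cV[int]_d) (c u xmin : 'cV[int]_n).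
Hypothesis xmin_opt : optimal A b c u xmin.
Implicit Types z : 'cV[int]_n.

Lemma optimal_gap z : feasible A b u z -> ~ optimal A b c u z ->
  cost c xmin < cost c z.
Proof.
move=> z_feas z_nopt; rewrite ltNge; apply/negP => z_le; apply: z_nopt.
by split=> // y y_feas; apply: le_trans z_le (xmin_opt.2 y y_feas).
Qed.

Lemma nonoptimal_not_stops z : feasible A b u z -> ~ optimal A b c u z ->
  ~ dd_stops A b c u z.
Proof.
move=> z_feas z_nopt z_stops.
have [g [al [gG al_gt0 step_feas gain]]] :=
  graver_step_gain z_feas xmin_opt.1 (optimal_gap z_feas z_nopt).
have := z_stops g al gG al_gt0 step_feas.
by have := optimal_gap z_feas z_nopt; move: gain; nia.
Qed.

Lemma dd_step_contraction z z' : feasible A b u z -> ~ optimal A b c u z ->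
  dd_step A b c u z z' ->
  feasible A b u z' /\
  (2 * n)%:R * (cost c z' - cost c xmin) <=
    ((2 * n)%:R - 1) * (cost c z - cost c xmin).
Proof.
move=> z_feas z_nopt [g [al [[_ _ -> z'_feas] [al_max _]]]]; split=> //.
have [g' [al' [g'G al'_gt0 step_feas gain]]] :=
  graver_step_gain z_feas xmin_opt.1 (optimal_gap z_feas z_nopt).
have := al_max g' al' g'G al'_gt0 step_feas.
by rewrite costDZ; move: gain; nia.
Qed.

Hypothesis n_gt0 : (0 < n)%N.
Variable x : nat -> 'cV[int]_n.
Hypothesis x_dd : forall k, ~ dd_stops A b c u (x k) -> dd_step A b c u (x k) (x k.+1).
Hypothesis x0_feas : feasible A b u (x 0).

Lemma dd_iterates_contract k :
  (exists2 j, (j <= k)%N & optimal A b c u (x j)) \/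
  feasible A b u (x k) /\
  (2 * n)%:R ^+ k * (cost c (x k) - cost c xmin) <=
    ((2 * n)%:R - 1) ^+ k * (cost c (x 0) - cost c xmin).
Proof.
elim: k => [|k [[j j_le j_opt]|[xk_feas xk_bd]]].
- by right; rewrite !expr0 !mul1r.
- by left; exists j => //; apply: leqW.
have [xk_opt|xk_nopt] := classic (optimal A b c u (x k)); first by left; exists k.
have [xk1_feas contr] := dd_step_contraction xk_feas xk_nopt
  (x_dd (nonoptimal_not_stops xk_feas xk_nopt)).
right; split=> //.
have K_ge0 : 0 <= (2 * n)%:R :> int by rewrite ler0n.
have K1_ge0 : 0 <= (2 * n)%:R - 1 :> int by rewrite subr_ge0 ler1n muln_gt0.
rewrite [X in X * _ <= _]exprSr [X in _ <= X * _]exprS -!mulrA.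
apply: le_trans (ler_wpM2l (exprn_ge0 _ K_ge0) contr) _.
by rewrite mulrCA; apply: ler_wpM2l.
Qed.

Lemma dd_optimal_within k :
  ((2 * n - 1) ^ k)%:R * (cost c (x 0) - cost c xmin) < ((2 * n) ^ k)%:R ->
  exists2 j, (j <= k)%N & optimal A b c u (x j).
Proof.
move=> contracted; case: (dd_iterates_contract k) => // [[xk_feas xk_bd]].
have [xk_opt|xk_nopt] := classic (optimal A b c u (x k)); first by exists k.
have gap := optimal_gap xk_feas xk_nopt.
move: contracted; rewrite ltNge !natrX natrB ?muln_gt0 // => /negP; case.
apply: le_trans xk_bd; rewrite ler_peMr ?exprn_ge0 ?ler0n //.
by move: gap; lia.
Qed.

End DeepestDescent.

Unset Implicit Arguments.
Theorem lemma1 (d n : nat) (hn : (2 <= n)%N) (A : 'M[int]_(d, n))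
  (b : 'cV[int]_d) (c u : 'cV[int]_n) (hu : forall i, 0 <= u i 0)
  (x0 xmin : 'cV[int]_n)
  (hx0 : feasible A b u x0) (hx0n : ~ optimal A b c u x0)
  (hxmin : optimal A b c u xmin)
  (x : nat -> 'cV[int]_n) (hstart : x 0%N = x0)
  (hseq : forall k : nat, ~ dd_stops A b c u (x k) -> dd_step A b c u (x k) (x k.+1)) :
  exists k : nat, within_bound k n (cost c (x0 - xmin)) /\ optimal A b c u (x k).
Proof.
have gap := optimal_gap hxmin hx0 hx0n.
have [D DE] : exists D : nat, cost c (x0 - xmin) = D%:Z.
  by exists `|cost c (x0 - xmin)|%N; rewrite abszE ger0_norm // costB subr_ge0 ltW.
have D_gt0 : (0 < D)%N by move: gap; rewrite -subr_gt0 -costB DE; lia.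
have [k [contracted k_bound]] := Log2Bound.steps_within_bound hn D_gt0.
have x0_feas : feasible A b u (x 0%N) by rewrite hstart.
have [|j j_le j_opt] := dd_optimal_within hxmin (ltnW hn) hseq x0_feas (k := k).
  by rewrite hstart -costB DE -natz -natrM ltr_nat.
by exists j; rewrite DE; split=> //; apply: Log2Bound.within_bound_le k_bound.
Qed.
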